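(* Let $n\geq 4$ be an integer divisible by $2$ or by $3$. Then $t(n)\leq n-3$.
   Context: For a positive integer $n$ let $S(\mathbb{Z}_n)$ be the set of bijections $\mathbb{Z}_n\to\mathbb{Z}_n$ (identified with $S_n$). For $\pi\in S(\mathbb{Z}_n)$, $\mathrm{cyc}(\pi)$ is the number of cycles (including fixed points) in its cycle decomposition, and $t(\pi)=n-\mathrm{cyc}(\pi)$ is the minimum number of transpositions whose product is $\pi$. The circular class of $\pi$ is $[\pi]=\{x\mapsto \pi(x+b): b\in\mathbb{Z}_n\}$, $t([\pi])=\min_{\sigma\in[\pi]}t(\sigma)$, and $t(n)=\max_{\pi\in S(\mathbb{Z}_n)}t([\pi])$. *)

From mathcomp Require Import all_boot all_order all_fingroup.
Set Implicit Arguments. Unset Strict Implicit. Unset Printing Implicit Defensive.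
Local Open Scope group_scope.

(* Z_n is represented by 'I_n with addition modulo n; rot n is x |-> x + 1 (mod n). *)
Definition rot (n : nat) : {perm 'I_n} := perm (@ordS_inj n).

(* the map x |-> pi (x + b); in mathcomp (s * t) x = t (s x) *)
Definition circ_shift (n : nat) (pi : {perm 'I_n}) (b : nat) : {perm 'I_n} :=
  (rot n ^+ b) * pi.

(* number of cycles, including fixed points *)
Definition cyc (n : nat) (pi : {perm 'I_n}) : nat := #|porbits pi|.

(* minimum number of transpositions: t(pi) = n - cyc(pi) *)
Definition tnum (n : nat) (pi : {perm 'I_n}) : nat := n - cyc pi.

Definition tclass (n : nat) (pi : {perm 'I_n}) : nat :=
  \big[minn/tnum pi]_(b < n) tnum (circ_shift pi b).

Definition tmax (n : nat) : nat := \max_(pi : {perm 'I_n}) tclass pi.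

Lemma circ_shiftE n (pi : {perm 'I_n}) b x :
  circ_shift pi b x = pi (iter b (@ordS n) x).
Proof.
rewrite /circ_shift permM; congr (pi _).
elim: b => [|b IH]; first by rewrite expg0 perm1.
by rewrite expgSr permM IH /rot permE.
Qed.

From Pilot Require Import Defs.
From mathcomp Require Import all_boot all_order all_fingroup all_algebra zify ring.
Set Implicit Arguments. Unset Strict Implicit. Unset Printing Implicit Defensive.
Import Order.TTheory GRing.Theory.

(* Suppose every shift s_b : x |-> pi (x + b) of pi has at most two cycles.
   Two fixed points and any third point would give three cycles, so s_b has
   at most one fixed point; as s_b fixes pi y exactly when b = y - pi y, the
   map y |-> y - pi y is a bijection of Z_n, and every s_b has exactly one
   fixed point and exactly two cycles.  If n is even, s_0 = pi and
   s_1 = rot * pi then have the same sign although the n-cycle rot is odd.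
   If 3 | n, a collision y + pi y = y' + pi y' would make some s_b swap two
   points besides fixing a third, hence (n >= 4) have three cycles; so
   y |-> y + pi y is a bijection too, and summing
   (y - pi y)^2 + (y + pi y)^2 = 2 y^2 + 2 (pi y)^2 over Z_n gives
   2 * sum y^2 = 0 in Z_n, i.e. n | (n - 1) n (2n - 1) / 3, which fails
   when 3 | n. *)

Section PermCycles.
Variable T : finType.
Implicit Types (s : {perm T}) (x y z : T).

Lemma exists_notin (xs : seq T) : size xs < #|T| -> exists z, z \notin xs.
Proof.
move=> lt_xs_T; have /card_gt0P[z]: 0 < #|[predC xs]|.
  by rewrite -(ltn_add2l #|xs|) addn0 cardC (leq_ltn_trans (card_size xs)).
by rewrite inE; exists z.
Qed.

Lemma porbit_fix s x : s x = x -> porbit s x = [set x].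
Proof.
move=> sx; apply/setP=> y; rewrite inE; apply/porbitP/eqP => [[i ->]|->].
  by elim: i => [|i IH]; rewrite ?expg0 ?perm1 // expgSr permM IH.
by exists 0; rewrite expg0 perm1.
Qed.

Lemma porbit_swap s x y : s x = y -> s y = x -> porbit s x \subset [set x; y].
Proof.
move=> sx sy; apply/subsetP=> _ /porbitP[i ->].
elim: i => [|i]; first by rewrite expg0 perm1 !inE eqxx.
by rewrite expgSr permM !inE => /orP[]/eqP->; rewrite ?sx ?sy eqxx ?orbT.
Qed.

Lemma size_le_card_porbits s (xs : seq T) :
  uniq [seq porbit s x | x <- xs] -> size xs <= #|porbits s|.
Proof.
move=> uniq_xs; rewrite -(size_map (porbit s)) -(card_uniqP uniq_xs).
by apply: subset_leq_card; apply/subsetP=> _ /mapP[x _ ->]; apply: imset_f.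
Qed.

Lemma card_porbits_fixed s x : 1 < #|T| -> s x = x -> 1 < #|porbits s|.
Proof.
move=> card2 sx; have [z] := exists_notin (xs := [:: x]) card2.
rewrite !inE => zx; apply: (size_le_card_porbits (xs := [:: z; x])).
by rewrite /= !inE eq_porbit_mem (porbit_fix sx) inE andbT.
Qed.

Lemma fixed_points_eq s x y :
  2 < #|T| -> #|porbits s| <= 2 -> s x = x -> s y = y -> x = y.
Proof.
move=> card3 le2 sx sy; apply/eqP; apply: contraTT le2 => xy.
have [z] := exists_notin (xs := [:: x; y]) card3.
rewrite !inE negb_or => /andP[zx zy]; rewrite -ltnNge.
apply: (size_le_card_porbits (xs := [:: z; x; y])).
rewrite /= !inE !eq_porbit_mem (porbit_fix sx) (porbit_fix sy) !inE.
by rewrite negb_or zx zy xy.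
Qed.

Lemma card_porbits_fixed_swap s x0 x1 x2 : 3 < #|T| ->
  s x0 = x0 -> x1 != x2 -> s x1 = x2 -> s x2 = x1 -> 2 < #|porbits s|.
Proof.
move=> card4 sx0 x12 sx1 sx2.
have x10 : x1 != x0 by apply: contraNneq x12 => e; rewrite -sx1 e sx0.
have [z] := exists_notin (xs := [:: x0; x1; x2]) card4.
rewrite !inE !negb_or => /and3P[zx0 zx1 zx2].
have zNx1 : z \notin porbit s x1.
  apply/negP => /(subsetP (porbit_swap sx1 sx2)).
  by rewrite !inE (negbTE zx1) (negbTE zx2).
apply: (size_le_card_porbits (xs := [:: z; x1; x0])).
by rewrite /= !inE !eq_porbit_mem (porbit_fix sx0) !inE negb_or zNx1 zx0 x10.
Qed.

End PermCycles.

Lemma val_iter_ordS n (x : 'I_n) k : iter k (@ordS n) x = (x + k) %% n :> nat.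
Proof.
elim: k => [|k IH] /=; first by rewrite addn0 modn_small.
by rewrite IH -addn1 modnDml addn1 addnS.
Qed.

Lemma rotX n k (x : 'I_n) : (Defs.rot n ^+ k)%g x = iter k (@ordS n) x.
Proof.
elim: k => [|k IH]; first by rewrite expg0 perm1.
by rewrite expgSr permM IH /Defs.rot permE.
Qed.

Lemma cyc_rot n : cyc (Defs.rot n.+1) = 1.
Proof.
rewrite /cyc; suff -> : porbits (Defs.rot n.+1) = [set porbit (Defs.rot n.+1) ord0].
  exact: cards1.
apply/setP=> P; rewrite inE; apply/imsetP/eqP=> [[x _ ->]|->]; last by exists ord0.
apply/eqP; rewrite eq_porbit_mem; apply/porbitP; exists x.
by rewrite rotX; apply: val_inj => /=; rewrite val_iter_ordS add0n modn_small.
Qed.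

Lemma odd_perm_rot n : odd_perm (Defs.rot n.+1) = odd n.
Proof. by rewrite /odd_perm card_ord -/(cyc _) cyc_rot /= addbT negbK. Qed.

Lemma odd_of_cyc_shift n (pi : {perm 'I_n.+1}) :
  cyc (circ_shift pi 1) = cyc (circ_shift pi 0) -> odd n.+1.
Proof.
move=> eq_cyc; have: odd_perm (circ_shift pi 1) = odd_perm (circ_shift pi 0).
  by rewrite /odd_perm -!/(cyc _) eq_cyc.
rewrite /circ_shift expg1 expg0 mul1g odd_permM odd_perm_rot /=.
by case: (odd n); case: (odd_perm pi).
Qed.

Lemma circ_shiftZE m (pi : {perm 'I_m.+2}) (b : 'I_m.+2) x :
  circ_shift pi b x = pi (x + b)%R.
Proof.
by rewrite circ_shiftE; congr (pi _); apply: val_inj => /=; rewrite val_iter_ordS.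
Qed.

Lemma double_sum_sqr_eq0 (R : finComNzRingType) (p : R -> R) :
  injective p -> injective (fun y => y - p y)%R -> injective (fun y => y + p y)%R ->
  ((\sum_(y : R) y ^+ 2) *+ 2 = 0)%R.
Proof.
move=> p_inj sub_p_inj add_p_inj; set S := (\sum_y y ^+ 2)%R.
have sum_sqr_inj (f : R -> R) : injective f -> (\sum_y f y ^+ 2)%R = S.
  by move=> f_inj; rewrite /S [RHS](reindex_inj f_inj).
have : (\sum_y ((y - p y) ^+ 2 + (y + p y) ^+ 2) = \sum_y (y ^+ 2 + p y ^+ 2) *+ 2)%R.
  by apply: eq_bigr => y _; ring.
rewrite -sumrMnl !big_split /= !sum_sqr_inj // => twice_S.
by apply: (@addrI _ (S + S)%R); rewrite addr0 -twice_S.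
Qed.

Lemma Zp_double_sum_sqr_eq0 m :
  ((\sum_(y : 'I_m.+2) y ^+ 2) *+ 2 == 0)%R = (m.+2 %| (\sum_(i < m.+2) i ^ 2).*2).
Proof.
have -> : (\sum_(y : 'I_m.+2) y ^+ 2 = (\sum_(i < m.+2) i ^ 2)%:R)%R.
  by rewrite natr_sum; apply: eq_bigr => i _; rewrite natrX natr_Zp.
by rewrite -mulrnA muln2 Zp_nat -val_eqE.
Qed.

Lemma sum_sqr_ord n : (\sum_(i < n.+1) i ^ 2) * 6 = n * n.+1 * n.*2.+1.
Proof.
elim: n => [|n IH]; first by rewrite big_ord_recr big_ord0.
by rewrite big_ord_recr /= mulnDl IH; lia.
Qed.

Lemma dvdn3_double_sum_sqr n :
  3 %| n.+1 -> (n.+1 %| (\sum_(i < n.+1) i ^ 2).*2) = false.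
Proof.
move=> /dvdnP[j def_n]; apply/negP => /dvdnP[q def_q].
have : q * 3 = n * n.*2.+1.
  apply/eqP; rewrite -(eqn_pmul2r (ltn0Sn n)); apply/eqP.
  by have := sum_sqr_ord n; nia.
nia.
Qed.

Section ShiftsWithTwoCycles.
Variables (m : nat) (pi : {perm 'I_m.+4}).
Local Notation n := m.+4.
Hypothesis cyc_shift_le2 : forall b : 'I_n, cyc (circ_shift pi b) <= 2.

Lemma shift_fixed_eq (b x y : 'I_n) :
  circ_shift pi b x = x -> circ_shift pi b y = y -> x = y.
Proof. by apply: fixed_points_eq; rewrite ?card_ord ?cyc_shift_le2. Qed.

Lemma shift_diff_fixed y : circ_shift pi (y - pi y)%R (pi y) = pi y.
Proof. by rewrite circ_shiftZE addrC subrK. Qed.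

Lemma subr_pi_inj : injective (fun y : 'I_n => y - pi y)%R.
Proof.
move=> y1 y2 /= eq_y; apply: (@perm_inj _ pi).
apply: (@shift_fixed_eq (y1 - pi y1)%R).
  exact: shift_diff_fixed.
by rewrite eq_y shift_diff_fixed.
Qed.

Lemma exists_shift_fixed (b : 'I_n) : exists x, circ_shift pi b x = x.
Proof.
have [dinv _ dK] := injF_bij subr_pi_inj.
by exists (pi (dinv b)); rewrite -{1}[b]dK shift_diff_fixed.
Qed.

Lemma cyc_shift_eq2 (b : 'I_n) : cyc (circ_shift pi b) = 2.
Proof.
apply/eqP; rewrite eqn_leq cyc_shift_le2; have [x fix_x] := exists_shift_fixed b.
by apply: card_porbits_fixed fix_x; rewrite card_ord.
Qed.

Lemma odd_n : odd n.
Proof.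
apply: (@odd_of_cyc_shift _ pi); have := cyc_shift_eq2 (Ordinal (isT : 1 < n)).
by have := cyc_shift_eq2 ord0 => /= -> ->.
Qed.

Lemma addr_pi_inj : injective (fun y : 'I_n => y + pi y)%R.
Proof.
move=> u v /= eq_uv; apply/eqP; apply: contraT => uv.
pose b := (v - pi u)%R; pose x1 := (u - b)%R; pose x2 := (v - b)%R.
have [x0 fix_x0] := exists_shift_fixed b.
have s_x1 : circ_shift pi b x1 = x2 by rewrite circ_shiftZE subrK /x2 /b; ring.
have s_x2 : circ_shift pi b x2 = x1.
  by rewrite circ_shiftZE subrK; apply: (@addrI _ v); rewrite -eq_uv /x1 /b; ring.
have x12 : x1 != x2 by rewrite (inj_eq (addIr _)).
have := cyc_shift_le2 b; rewrite leqNgt.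
by rewrite (card_porbits_fixed_swap _ fix_x0 x12 s_x1 s_x2) ?card_ord.
Qed.

Lemma ndvd3_n : ~~ (3 %| n).
Proof.
apply/negP => /dvdn3_double_sum_sqr; rewrite -Zp_double_sum_sqr_eq0.
by rewrite (double_sum_sqr_eq0 (@perm_inj _ pi) subr_pi_inj addr_pi_inj) eqxx.
Qed.

End ShiftsWithTwoCycles.

Lemma exists_shift_cyc_ge3 m (pi : {perm 'I_m.+4}) :
  (2 %| m.+4) || (3 %| m.+4) -> exists b : 'I_m.+4, 2 < cyc (circ_shift pi b).
Proof.
move=> div; apply/existsP; apply: contraLR div => /existsPn cyc_le2.
have {}cyc_le2 (b : 'I_m.+4) : cyc (circ_shift pi b) <= 2 by rewrite leqNgt cyc_le2.
by rewrite negb_or dvdn2 negbK (odd_n cyc_le2) (ndvd3_n cyc_le2).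
Qed.

Lemma tclass_le_shift n (pi : {perm 'I_n}) (b : 'I_n) :
  tclass pi <= tnum (circ_shift pi b).
Proof. exact: (bigmin_le (tnum pi) b (fun c : 'I_n => tnum (circ_shift pi c))). Qed.

Theorem theorem1p3 (n : nat) :
  4 <= n -> (2 %| n) || (3 %| n) -> tmax n <= n - 3.
Proof.
case: n => [|[|[|[|m]]]] // _ div.
apply/bigmax_leqP => pi _.
have [b cyc_b] := exists_shift_cyc_ge3 pi div.
by apply: leq_trans (tclass_le_shift pi b) _; rewrite leq_sub2l.
Qed.
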